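(* Let $X$ be a compact metric space whose metric $d$ is an ultrametric, let $0<L<1$, and let $f\colon X\to X$ be a continuous map. The following are equivalent: (1) $f$ has the $L$-Lipschitz shadowing property; (2) there is $\delta_0>0$ such that $B_\delta(f(x))\subset f(B_{L\delta}(x))$ for all $0<\delta\le\delta_0$ and all $x\in X$.
   Context: $d$ is an ultrametric: $d(x,z)\le\max\{d(x,y),d(y,z)\}$ for all $x,y,z$. $B_r(x)=\{y\in X: d(x,y)\le r\}$ is the closed $r$-ball. For $\delta>0$, a sequence $(x_i)_{i\ge0}$ is a $\delta$-pseudo orbit of $f$ if $d(f(x_i),x_{i+1})\le\delta$ for all $i\ge0$; it is $\epsilon$-shadowed by $x$ if $d(f^i(x),x_i)\le\epsilon$ for all $i\ge0$. $f$ has the $L$-Lipschitz shadowing property if there is $\delta_0>0$ such that for every $0<\delta\le\delta_0$, every $\delta$-pseudo orbit of $f$ is $L\delta$-shadowed by some point of $X$. *)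

From Stdlib Require Import Reals.
Open Scope R_scope.

Definition is_metric {X : Type} (d : X -> X -> R) : Prop :=
  (forall x y, 0 <= d x y) /\
  (forall x y, d x y = 0 <-> x = y) /\
  (forall x y, d x y = d y x) /\
  (forall x y z, d x z <= d x y + d y z).

Definition is_ultrametric {X : Type} (d : X -> X -> R) : Prop :=
  forall x y z, d x z <= Rmax (d x y) (d y z).

Definition metric_open {X : Type} (d : X -> X -> R) (U : X -> Prop) : Prop :=
  forall x, U x -> exists e, 0 < e /\ forall y, d x y < e -> U y.

Definition metric_compact {X : Type} (d : X -> X -> R) : Prop :=
  forall (I : Type) (U : I -> X -> Prop),
    (forall i, metric_open d (U i)) ->
    (forall x, exists i, U i x) ->
    exists l : list I, forall x, exists i, List.In i l /\ U i x.

Definition metric_continuous {X : Type} (d : X -> X -> R) (f : X -> X) : Prop :=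
  forall x eps, 0 < eps -> exists del, 0 < del /\
    forall y, d x y < del -> d (f x) (f y) < eps.

Definition cball {X : Type} (d : X -> X -> R) (x : X) (r : R) : X -> Prop :=
  fun y => d x y <= r.

Definition pseudo_orbit {X : Type} (d : X -> X -> R) (f : X -> X)
  (del : R) (xs : nat -> X) : Prop :=
  forall i, d (f (xs i)) (xs (S i)) <= del.

Definition shadowed {X : Type} (d : X -> X -> R) (f : X -> X)
  (eps : R) (xs : nat -> X) (x : X) : Prop :=
  forall i, d (Nat.iter i f x) (xs i) <= eps.

Definition lipschitz_shadowing {X : Type} (d : X -> X -> R) (f : X -> X)
  (L : R) : Prop :=
  exists del0, 0 < del0 /\
    forall del, 0 < del -> del <= del0 ->
      forall xs, pseudo_orbit d f del xs ->
        exists x, shadowed d f (L * del) xs x.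

From Stdlib Require Import Reals Lra Lia List Classical ClassicalEpsilon.
Open Scope R_scope.

(* Both directions pass through nested closed sets, whose intersection is
   nonempty by compactness.  (1) => (2): shadowing the pseudo orbit
   x, y, f y, f^2 y, ... yields a point whose image is L times closer to y;
   iterating gives points z_n with d(z_n, z_(n+1)) <= L^(n+1) del and
   d(f z_n, y) <= L^n del.  In an ultrametric space the balls
   B_(L^(n+1) del)(z_n) are nested, and a common point is an exact preimage
   of y.  (2) => (1): pulling back along the exact preimages one step at a
   time shadows every finite segment of a pseudo orbit, and the sets of
   points shadowing the first n steps are closed and nested. *)

Definition metric_closed {X : Type} (d : X -> X -> R) (A : X -> Prop) : Prop :=
  metric_open d (fun x => ~ A x).

Lemma pow_le_one (L : R) (n : nat) : 0 <= L <= 1 -> L ^ n <= 1.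
Proof. intros hL. rewrite <- (pow1 n). apply pow_incr. exact hL. Qed.

Lemma geometric_eventually_lt (L c e : R) :
  0 <= L < 1 -> 0 < c -> 0 < e -> exists n, L ^ n * c < e.
Proof.
  intros hL hc he.
  destruct (pow_lt_1_zero L ltac:(rewrite Rabs_pos_eq; lra) (e / c)) as [n hn].
  { apply Rdiv_lt_0_compat; assumption. }
  exists n. specialize (hn n (le_n n)).
  rewrite Rabs_pos_eq in hn by (apply pow_le; lra).
  apply (Rmult_lt_compat_r c) in hn; [|exact hc].
  unfold Rdiv in hn. rewrite Rmult_assoc, Rinv_l, Rmult_1_r in hn; lra.
Qed.

Lemma dependent_choice_seq {A : Type} (P : nat -> A -> Prop)
  (Q : nat -> A -> A -> Prop) (a : A) :
  P 0%nat a -> (forall n x, P n x -> exists y, Q n x y /\ P (S n) y) ->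
  exists z : nat -> A, z 0%nat = a /\ forall n, P n (z n) /\ Q n (z n) (z (S n)).
Proof.
  intros ha hstep.
  set (next := fun n x => epsilon (inhabits x) (fun y => Q n x y /\ P (S n) y)).
  assert (hnext : forall n x, P n x -> Q n x (next n x) /\ P (S n) (next n x)).
  { intros n x hx. apply epsilon_spec, hstep, hx. }
  set (z := fix z n := match n with 0%nat => a | S k => next k (z k) end).
  assert (hz : forall n, P n (z n)).
  { induction n as [|n IH]; [exact ha | exact (proj2 (hnext n _ IH))]. }
  exists z. split; [reflexivity|].
  intro n. split; [apply hz | exact (proj1 (hnext n _ (hz n)))].
Qed.

Lemma ultrametric_cball_sub {X : Type} (d : X -> X -> R) (hu : is_ultrametric d)
  (x y : X) (r s : R) :
  d x y <= r -> s <= r -> forall v, cball d y s v -> cball d x r v.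
Proof.
  unfold cball. intros hxy hsr v hyv.
  eapply Rle_trans; [apply (hu x y v)|]. apply Rmax_lub; lra.
Qed.

Section MetricSpace.

Context {X : Type} (d : X -> X -> R).

Lemma compact_decreasing_closed_inter (hc : metric_compact d) (A : nat -> X -> Prop) :
  (forall n w, A (S n) w -> A n w) -> (forall n, exists w, A n w) ->
  (forall n, metric_closed d (A n)) -> exists w, forall n, A n w.
Proof.
  intros hdec hne hcl.
  assert (hmono : forall m n w, (m <= n)%nat -> A n w -> A m w).
  { intros m n w hmn. induction hmn; auto. }
  apply NNPP. intro hempty.
  destruct (hc nat (fun n w => ~ A n w) hcl) as [l hl].
  { intro w. apply not_all_ex_not. intro hall. apply hempty. exists w. exact hall. }
  destruct (hne (list_max l)) as [w hw].
  destruct (hl w) as [i [hi hnot]]. apply hnot.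
  apply (hmono i (list_max l)); [|exact hw].
  exact (proj1 (Forall_forall _ l) (proj1 (list_max_le l _) (Nat.le_refl _)) i hi).
Qed.

Lemma metric_closed_forall (I : Type) (P : I -> Prop) (A : I -> X -> Prop) :
  (forall i, P i -> metric_closed d (A i)) ->
  metric_closed d (fun w => forall i, P i -> A i w).
Proof.
  intros hcl w hw.
  apply not_all_ex_not in hw as [i hi]. apply imply_to_and in hi as [hPi hAi].
  destruct (hcl i hPi w hAi) as [e [he hball]].
  exists e. split; [exact he|]. intros v hv hall. exact (hball v hv (hall i hPi)).
Qed.

Lemma metric_closed_preimage (g : X -> X) (A : X -> Prop) :
  metric_continuous d g -> metric_closed d A -> metric_closed d (fun w => A (g w)).
Proof.
  intros hg hA w hw.
  destruct (hA (g w) hw) as [e [he hball]].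
  destruct (hg w e he) as [e' [he' hcont]].
  exists e'. split; [exact he'|]. intros v hv. exact (hball (g v) (hcont v hv)).
Qed.

Lemma metric_continuous_iter (f : X -> X) (k : nat) :
  metric_continuous d f -> metric_continuous d (Nat.iter k f).
Proof.
  intro hf. induction k as [|k IH]; intros x e he.
  - exists e. split; [exact he | auto].
  - destruct (hf (Nat.iter k f x) e he) as [e1 [he1 h1]].
    destruct (IH x e1 he1) as [e2 [he2 h2]].
    exists e2. split; [exact he2|]. intros y hy. exact (h1 _ (h2 y hy)).
Qed.

Hypothesis hd : is_metric d.

Lemma dist_ge0 (x y : X) : 0 <= d x y.
Proof. apply hd. Qed.

Lemma dist_refl (x : X) : d x x = 0.
Proof. apply hd. reflexivity. Qed.

Lemma dist_sym (x y : X) : d x y = d y x.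
Proof. apply hd. Qed.

Lemma metric_closed_cball (x : X) (r : R) : metric_closed d (cball d x r).
Proof.
  unfold cball. intros w hw. exists (d x w - r). split; [lra|].
  intros v hv hxv. destruct hd as [_ [_ [hsym htri]]].
  specialize (htri x v w). rewrite (hsym v w) in htri. lra.
Qed.

Lemma continuous_limit_eq (f : X -> X) (w y : X) (z : nat -> X) :
  metric_continuous d f ->
  (forall e, 0 < e -> exists n, d w (z n) < e /\ d (f (z n)) y < e) -> f w = y.
Proof.
  intros hf hz. apply hd. apply NNPP. intro hne.
  set (a := d (f w) y).
  assert (ha : 0 < a) by (pose proof (dist_ge0 (f w) y); unfold a in *; lra).
  destruct (hf w (a / 2)) as [e [he hcont]]; [lra|].
  destruct (hz (Rmin e (a / 2))) as [n [hn1 hn2]]; [apply Rmin_pos; lra|].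
  pose proof (Rmin_l e (a / 2)). pose proof (Rmin_r e (a / 2)).
  assert (hfz : d (f w) (f (z n)) < a / 2) by (apply hcont; lra).
  destruct hd as [_ [_ [_ htri]]]. specialize (htri (f w) (f (z n)) y).
  unfold a in *. lra.
Qed.

End MetricSpace.

Section Shadowing.

Variables (X : Type) (d : X -> X -> R) (f : X -> X) (L : R).
Hypotheses (hd : is_metric d) (hu : is_ultrametric d) (hc : metric_compact d)
  (hL : 0 < L < 1) (hf : metric_continuous d f).

Lemma shadowing_approx_preimage (eta : R) (x y : X) :
  (forall xs, pseudo_orbit d f eta xs -> exists z, shadowed d f (L * eta) xs z) ->
  d (f x) y <= eta -> exists z, d x z <= L * eta /\ d (f z) y <= L * eta.
Proof.
  intros hsh hxy.
  destruct (hsh (fun i => match i with 0%nat => x | S k => Nat.iter k f y end))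
    as [z hz].
  - intros [|k]; [exact hxy|]. simpl. rewrite (dist_refl d hd).
    pose proof (dist_ge0 d hd (f x) y). lra.
  - exists z. split; [rewrite (dist_sym d hd); exact (hz 0%nat) | exact (hz 1%nat)].
Qed.

Lemma shadowing_exact_preimage (del : R) (x y : X) :
  0 < del ->
  (forall eta, 0 < eta -> eta <= del ->
     forall xs, pseudo_orbit d f eta xs -> exists z, shadowed d f (L * eta) xs z) ->
  d (f x) y <= del -> exists z, d x z <= L * del /\ f z = y.
Proof.
  intros hdel hsh hxy.
  set (r := fun n => L ^ n * del).
  assert (hr0 : r 0%nat = del) by (unfold r; simpl; ring).
  assert (hrS : forall n, r (S n) = L * r n) by (intro n; unfold r; simpl; ring).
  assert (hr : forall n, 0 < r n <= del).
  { intro n. unfold r. pose proof (pow_lt L n (proj1 hL)).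
    pose proof (pow_le_one L n ltac:(lra)). split; nra. }
  assert (hrdec : forall n, r (S n) <= r n).
  { intro n. rewrite hrS. pose proof (hr n). nra. }
  destruct (dependent_choice_seq (fun n a => d (f a) y <= r n)
              (fun n a b => d a b <= r (S n)) x) as [z [hz0 hz]].
  { rewrite hr0. exact hxy. }
  { intros n a ha. rewrite !hrS.
    apply shadowing_approx_preimage; [|exact ha].
    apply hsh; apply hr. }
  destruct (compact_decreasing_closed_inter d hc (fun n => cball d (z n) (r (S n))))
    as [w hw].
  - intro n. apply (ultrametric_cball_sub d hu _ _ _ _ (proj2 (hz n)) (hrdec (S n))).
  - intro n. exists (z n). unfold cball. rewrite (dist_refl d hd). apply Rlt_le, hr.
  - intro n. apply (metric_closed_cball d hd).
  - exists w. split.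
    + rewrite <- hz0, <- hr0, <- hrS. exact (hw 0%nat).
    + apply (continuous_limit_eq d hd f w y z hf). intros e he.
      destruct (geometric_eventually_lt L del e ltac:(lra) hdel he) as [n hn].
      exists n. fold (r n) in hn. split.
      * rewrite (dist_sym d hd). pose proof (hw n). pose proof (hrdec n).
        unfold cball in *. lra.
      * pose proof (proj1 (hz n)). lra.
Qed.

Section ExactPreimages.

Variables (del : R) (xs : nat -> X).
Hypotheses (hdel : 0 < del) (hxs : pseudo_orbit d f del xs)
  (hpre : forall x y, cball d (f x) del y -> exists z, cball d x (L * del) z /\ f z = y).

Lemma exact_preimage_segment_shadow (m k : nat) :
  exists w, forall i, (i <= m)%nat -> d (Nat.iter i f w) (xs (k + i)%nat) <= L * del.
Proof.
  revert k. induction m as [|m IH]; intro k.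
  - exists (xs k). intros i hi. replace i with 0%nat by lia. simpl.
    rewrite Nat.add_0_r, (dist_refl d hd). apply Rmult_le_pos; lra.
  - destruct (IH (S k)) as [w hw].
    assert (hfw : cball d (f (xs k)) del w).
    { unfold cball. eapply Rle_trans; [apply (hu _ (xs (S k)))|].
      apply Rmax_lub; [apply hxs|].
      specialize (hw 0%nat (Nat.le_0_l m)). rewrite Nat.add_0_r in hw. simpl in hw.
      rewrite (dist_sym d hd). nra. }
    destruct (hpre _ _ hfw) as [z [hz hfz]].
    exists z. intros [|j] hj.
    + simpl. rewrite Nat.add_0_r, (dist_sym d hd). exact hz.
    + rewrite Nat.iter_succ_r, hfz, <- Nat.add_succ_comm. apply hw. lia.
Qed.

Lemma exact_preimage_shadowing : exists w, shadowed d f (L * del) xs w.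
Proof.
  destruct (compact_decreasing_closed_inter d hc
    (fun n w => forall i, (i <= n)%nat -> cball d (xs i) (L * del) (Nat.iter i f w)))
    as [w hw].
  - intros n w hw i hi. apply hw. lia.
  - intro n. destruct (exact_preimage_segment_shadow n 0) as [w hw].
    exists w. intros i hi. unfold cball. rewrite (dist_sym d hd). exact (hw i hi).
  - intro n. apply metric_closed_forall. intros i _.
    apply (metric_closed_preimage d (Nat.iter i f) (cball d (xs i) (L * del))).
    + apply metric_continuous_iter, hf.
    + apply (metric_closed_cball d hd).
  - exists w. intro i. rewrite (dist_sym d hd). exact (hw i i (le_n i)).
Qed.

End ExactPreimages.

End Shadowing.

Theorem theorem1p6 (X : Type) (d : X -> X -> R) (L : R) (f : X -> X)
  (hd : is_metric d) (hu : is_ultrametric d) (hc : metric_compact d)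
  (hL0 : 0 < L) (hL1 : L < 1) (hf : metric_continuous d f) :
  lipschitz_shadowing d f L <->
  exists del0, 0 < del0 /\
    forall del, 0 < del -> del <= del0 -> forall x y,
      cball d (f x) del y -> exists z, cball d x (L * del) z /\ f z = y.
Proof.
  split.
  - intros [del0 [hdel0 hsh]]. exists del0. split; [exact hdel0|].
    intros del hdel hle x y hxy.
    apply (shadowing_exact_preimage X d f L hd hu hc ltac:(lra) hf); [exact hdel| |exact hxy].
    intros eta heta hle'. apply hsh; lra.
  - intros [del0 [hdel0 hpre]]. exists del0. split; [exact hdel0|].
    intros del hdel hle xs hxs.
    exact (exact_preimage_shadowing X d f L hd hu hc ltac:(lra) hf del xs hdel hxs
             (hpre del hdel hle)).
Qed.
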